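(* Let $Y$ be a set of vectors in a finite-dimensional real vector space which is disconnected, with decomposition $(Y_1,Y_2)$, and suppose that for each $i\in\{1,2\}$, every triple of vectors in $Y_i$ is contained in a full subset of $Y_i$ every subset of which is clean. Then every triple of vectors in $Y$ is contained in a full subset of $Y$ every subset of which is clean.
   Context: $\mathrm{Span}_+$ denotes nonnegative linear combinations. For a set $Z$ of vectors and $B\subseteq Z$: $B$ is closed in $Z$ if $\alpha,\beta\in B$, $\gamma\in\mathrm{Span}_+(\alpha,\beta)\cap Z$ imply $\gamma\in B$; coclosed if $Z\setminus B$ is closed; biclosed if both; weakly separable in $Z$ if $\mathrm{Span}_+(B)\cap\mathrm{Span}_+(Z\setminus B)=\{0\}$. $Z$ is clean if every subset biclosed in $Z$ is weakly separable in $Z$. A subset $F\subseteq Y$ is full in $Y$ if $F\cap\mathrm{Span}\{\alpha,\beta\}=Y\cap\mathrm{Span}\{\alpha,\beta\}$ for all $\alpha,\beta\in F$. $Y$ is disconnected if $Y=Y_1\sqcup Y_2$ with $Y_1,Y_2$ nonempty and both full in $Y$; $(Y_1,Y_2)$ is then a decomposition of $Y$. *)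

From mathcomp Require Import all_boot all_order all_algebra.
From mathcomp Require Import reals.
Set Implicit Arguments. Unset Strict Implicit. Unset Printing Implicit Defensive.
Import Order.TTheory GRing.Theory Num.Theory.
Local Open Scope ring_scope.

Section Defs.
Variables (R : realType) (n : nat).
Notation V := 'rV[R]_n.
Definition vset := V -> Prop.

Definition subset_of (A B : vset) := forall v, A v -> B v.
Definition setminus (A B : vset) : vset := fun v => A v /\ ~ B v.

Definition spanp (B : vset) (v : V) : Prop :=
  exists (m : nat) (f : 'I_m -> V) (c : 'I_m -> R),
    (forall i, B (f i)) /\ (forall i, 0 <= c i) /\ v = \sum_(i < m) c i *: f i.

Definition spanp2 (a b v : V) : Prop :=
  exists x y : R, 0 <= x /\ 0 <= y /\ v = x *: a + y *: b.

Definition span2 (a b v : V) : Prop :=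
  exists x y : R, v = x *: a + y *: b.

Definition closed_in (Z B : vset) : Prop :=
  forall a b g, B a -> B b -> Z g -> spanp2 a b g -> B g.

Definition coclosed_in (Z B : vset) : Prop := closed_in Z (setminus Z B).

Definition biclosed_in (Z B : vset) : Prop :=
  subset_of B Z /\ closed_in Z B /\ coclosed_in Z B.

Definition weakly_separable_in (Z B : vset) : Prop :=
  forall v, spanp B v -> spanp (setminus Z B) v -> v = 0.

Definition clean (Z : vset) : Prop :=
  forall B, biclosed_in Z B -> weakly_separable_in Z B.

Definition full_in (Y F : vset) : Prop :=
  subset_of F Y /\
  forall a b, F a -> F b -> forall v, (F v /\ span2 a b v) <-> (Y v /\ span2 a b v).

Definition decomposition (Y Y1 Y2 : vset) : Prop :=
  (forall v, Y v <-> (Y1 v \/ Y2 v)) /\ (forall v, ~ (Y1 v /\ Y2 v)) /\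
  (exists v, Y1 v) /\ (exists v, Y2 v) /\ full_in Y Y1 /\ full_in Y Y2.

Definition disconnected (Y : vset) : Prop :=
  exists Y1 Y2, decomposition Y Y1 Y2.

Definition triple_clean_property (Y : vset) : Prop :=
  forall a b c, Y a -> Y b -> Y c ->
    exists F : vset, full_in Y F /\ F a /\ F b /\ F c /\
      forall S : vset, subset_of S F -> clean S.
End Defs.

(* If the triple lies in one part Y_i, a full subset of Y_i around it is full
   in Y, because Y_i is full in Y.  Otherwise, say a, b in Y1 and c in Y2, and
   take F = Y ∩ (Span{a,b} ∪ Span{c}).  By fullness of the parts,
   Y ∩ Span{a,b} ⊆ Y1 and Y ∩ Span{c} ⊆ Y2, so c ∉ Span{a,b} and the two spans
   meet only in 0.  F is full: a vector of Y1 in the plane of x ∈ Y1 and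
   y ∈ Y2 is a multiple of x, since otherwise y would lie in the plane of two
   vectors of Y1.  A subset S of F is clean: its parts in Span{a,b} and in
   Span{c} lie in full subsets of Y1 and Y2 all of whose subsets are clean,
   and a nonnegative combination from S splits uniquely along the direct sum
   Span{a,b} ⊕ Span{c}, so cleanness of the two parts gives cleanness of S. *)

From mathcomp Require Import all_boot all_order all_algebra.
From mathcomp Require Import reals.
From Stdlib Require Import Classical.
Set Implicit Arguments. Unset Strict Implicit. Unset Printing Implicit Defensive.
Import Order.TTheory GRing.Theory Num.Theory.
Local Open Scope ring_scope.

Section Spans.
Variables (R : realType) (n : nat).
Notation V := 'rV[R]_n.
Implicit Types (B : vset R n) (U : {vspace V}) (a b c u v x y : V).

Lemma spanp_ind B (P : V -> Prop) :
  P 0 -> (forall u t x, P u -> 0 <= t -> B x -> P (u + t *: x)) ->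
  forall v, spanp B v -> P v.
Proof.
move=> P0 PS v [m [f [c [Bf [c_ge0 ->]]]]].
elim: m f c Bf c_ge0 => [|m IHm] f c Bf c_ge0; first by rewrite big_ord0.
rewrite big_ord_recr /=; apply: PS => //.
exact: (IHm (fun i => f (widen_ord _ i)) (fun i => c (widen_ord _ i))).
Qed.

Lemma spanp0 B : spanp B 0.
Proof.
by exists 0%N, (fun=> 0), (fun=> 0); rewrite big_ord0; split=> [[]//|].
Qed.

Lemma spanp_add B u v : spanp B u -> spanp B v -> spanp B (u + v).
Proof.
move=> [m1 [f1 [c1 [Bf1 [c1_ge0 ->]]]]] [m2 [f2 [c2 [Bf2 [c2_ge0 ->]]]]].
exists (m1 + m2)%N,
  (fun i => match split i with inl j => f1 j | inr j => f2 j end),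
  (fun i => match split i with inl j => c1 j | inr j => c2 j end).
split; [by move=> i; case: split|split; first by move=> i; case: split].
rewrite big_split_ord; congr (_ + _); apply: eq_bigr => i _.
  by rewrite (unsplitK (inl i : 'I_m1 + 'I_m2)).
by rewrite (unsplitK (inr i : 'I_m1 + 'I_m2)).
Qed.

Lemma spanp_scale B t x : 0 <= t -> B x -> spanp B (t *: x).
Proof.
by move=> t_ge0 Bx; exists 1%N, (fun=> x), (fun=> t); rewrite big_ord1.
Qed.

Lemma spanp_mono B B' v : subset_of B B' -> spanp B v -> spanp B' v.
Proof.
move=> sBB' [m [f [c [Bf [c_ge0 ->]]]]].
by exists m, f, c; split=> // i; apply: sBB'.
Qed.

Lemma spanp_split B (Q : V -> Prop) v : spanp B v ->
  exists p l,
    [/\ spanp (fun x => B x /\ Q x) p, spanp (setminus B Q) l & v = p + l].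
Proof.
elim/spanp_ind => [|u t x [p [l [Sp Sl ->]]] t_ge0 Bx].
  by exists 0, 0; rewrite addr0; split=> //; apply: spanp0.
have [Qx|nQx] := classic (Q x).
  exists (p + t *: x), l; rewrite addrAC; split=> //.
  exact/spanp_add/spanp_scale.
exists p, (l + t *: x); rewrite addrA; split=> //.
exact/spanp_add/spanp_scale.
Qed.

Lemma memv_spanp B U v : (forall x, B x -> x \in U) -> spanp B v -> v \in U.
Proof.
move=> sBU; move: v; apply: spanp_ind => [|u t x Uu _ /sBU Ux].
  exact: mem0v.
by rewrite memvD // memvZ.
Qed.

Lemma span2E a b v : span2 a b v <-> v \in (<[a]> + <[b]>)%VS.
Proof.
split=> [[s [t ->]]|/memv_addP[_ /vlineP[s ->] [_ /vlineP[t ->] ->]]].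
  by rewrite memv_add // memvZ // memv_line.
by exists s, t.
Qed.

Lemma span2_memv a b U v : a \in U -> b \in U -> span2 a b v -> v \in U.
Proof.
move=> Ua Ub /span2E; apply/subvP.
by rewrite subv_add -!memvE Ua Ub.
Qed.

Lemma span2_sym a b v : span2 a b v -> span2 b a v.
Proof. by move=> [s [t ->]]; exists t, s; rewrite addrC. Qed.

Lemma span2_solve a b v s t : v = s *: a + t *: b -> t != 0 -> span2 v a b.
Proof.
move=> -> t_neq0; exists t^-1, (- (t^-1 * s)).
by rewrite scalerDr !scalerA mulVf // scale1r scaleNr addrAC subrr add0r.
Qed.

Lemma capv_line_eq0 U c : c \notin U -> (U :&: <[c]> = 0)%VS.
Proof.
move=> Uc; apply/eqP; rewrite -subv0; apply/subvP => v.
move=> /memv_capP[Uv /vlineP[k vE]]; move: Uv.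
by rewrite memv0 vE rpredZeq (negPf Uc) orbF => /eqP->; rewrite scale0r.
Qed.

End Spans.

Section Clean.
Variables (R : realType) (n : nat).
Notation V := 'rV[R]_n.
Implicit Types (S B : vset R n) (Q : V -> Prop).

Lemma biclosed_in_restrict S B Q : biclosed_in S B ->
  biclosed_in (fun x => S x /\ Q x) (fun x => B x /\ Q x).
Proof.
move=> [sBS [clB coB]]; split; [|split].
- by move=> x [/sBS].
- by move=> x y g [Bx _] [By _] [Sg Qg] xyg; split=> //; apply: (clB x y).
- move=> x y g [[Sx Qx] nBx] [[Sy Qy] nBy] [Sg Qg] xyg; split=> // -[Bg _].
  have [_ nBg] := coB x y g (conj Sx (fun Bx => nBx (conj Bx Qx)))
    (conj Sy (fun By => nBy (conj By Qy))) Sg xyg.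
  exact: nBg.
Qed.

Lemma clean_split S Q (U W : {vspace V}) : (U :&: W = 0)%VS ->
  (forall x, S x -> Q x -> x \in U) -> (forall x, S x -> ~ Q x -> x \in W) ->
  clean (fun x => S x /\ Q x) -> clean (setminus S Q) -> clean S.
Proof.
move=> dUW SQU SnQW cleanQ cleannQ B biB v vB vSB.
have sBS : subset_of B S by case: biB.
have sSBS : subset_of (setminus S B) S by move=> x [].
have inU B' p : subset_of B' S -> spanp (fun x => B' x /\ Q x) p -> p \in U.
  by move=> sB'S; apply: memv_spanp => x [/sB'S Sx Qx]; apply: SQU.
have inW B' l : subset_of B' S -> spanp (setminus B' Q) l -> l \in W.
  by move=> sB'S; apply: memv_spanp => x [/sB'S Sx nQx]; apply: SnQW.
have [p1 [l1 [p1B l1B E1]]] := spanp_split Q vB.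
have [p2 [l2 [p2SB l2SB E2]]] := spanp_split Q vSB.
have /directv_addP/directv_add_unique/(_ p1 p2 l1 l2) := dUW.
rewrite -E1 -E2 eqxx xpair_eqE => /(_ (inU _ _ sBS p1B) (inU _ _ sSBS p2SB)).
move=> /(_ (inW _ _ sBS l1B) (inW _ _ sSBS l2SB)) /esym/andP[/eqP p12 /eqP l12].
rewrite E1; have -> : p1 = 0.
  apply: (cleanQ _ (biclosed_in_restrict Q biB)) => //; rewrite p12.
  by apply: spanp_mono p2SB => x [[Sx nBx] Qx]; split=> // -[].
have -> : l1 = 0.
  apply: (cleannQ _ (biclosed_in_restrict (fun x => ~ Q x) biB)) => //.
  by rewrite l12; apply: spanp_mono l2SB => x [[Sx nBx] nQx]; split=> // -[].
by rewrite addr0.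
Qed.

End Clean.

Section Decomposition.
Variables (R : realType) (n : nat).
Notation V := 'rV[R]_n.
Implicit Types (Y F : vset R n) (a b c v x y : V).

Definition hereditarily_clean F := forall S, subset_of S F -> clean S.

Definition triple_clean_at Y a b c :=
  exists F, full_in Y F /\ F a /\ F b /\ F c /\ hereditarily_clean F.

Lemma triple_clean_at_rot Y a b c :
  triple_clean_at Y a b c -> triple_clean_at Y b c a.
Proof. by move=> [F [fF [Fa [Fb [Fc hF]]]]]; exists F. Qed.

Lemma full_in_span2 Y F a b v :
  full_in Y F -> F a -> F b -> Y v -> span2 a b v -> F v.
Proof.
by move=> [_ fF] Fa Fb Yv abv; case: (proj2 (fF a b Fa Fb v) (conj Yv abv)).
Qed.

Lemma full_in_trans Y (Y1 : vset R n) F :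
  full_in Y Y1 -> full_in Y1 F -> full_in Y F.
Proof.
move=> [sY1 fY1] [sF fF]; split=> [v /sF /sY1 //|a b Fa Fb v].
by rewrite fF //; apply: fY1; apply: sF.
Qed.

Lemma full_in_span2_line Y F x y v :
  full_in Y F -> F x -> F v -> Y y -> ~ F y -> span2 x y v -> v \in <[x]>%VS.
Proof.
move=> fF Fx Fv Yy nFy [s [t vE]].
have [t0|t_neq0] := eqVneq t 0.
  by rewrite vE t0 scale0r addr0 memvZ // memv_line.
by case: nFy; apply: (full_in_span2 fF Fv Fx Yy (span2_solve vE t_neq0)).
Qed.

Lemma decomposition_sym Y (Y1 Y2 : vset R n) :
  decomposition Y Y1 Y2 -> decomposition Y Y2 Y1.
Proof.
move=> [cover [disj [ne1 [ne2 [f1 f2]]]]].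
split=> [v|]; first by rewrite cover or_comm.
by split=> [v [? ?]|]; [apply: (disj v) | do 3?split].
Qed.

Lemma decomposition_span2 Y (Y1 Y2 : vset R n) x y v : decomposition Y Y1 Y2 ->
  Y1 x -> Y2 y -> Y v -> span2 x y v -> v \in <[x]>%VS \/ v \in <[y]>%VS.
Proof.
move=> [cover [disj [_ [_ [f1 f2]]]]] x1 y2 Yv xyv.
case/cover: (Yv) => [v1|v2]; [left|right].
  by apply: (full_in_span2_line f1 x1 v1 (f2.1 _ y2)) => // y1; apply: (disj y).
apply: (full_in_span2_line f2 y2 v2 (f1.1 _ x1) _ (span2_sym xyv)) => x2.
exact: (disj x).
Qed.

Lemma triple_clean_at_part Y (Y1 Y2 : vset R n) a b c :
  decomposition Y Y1 Y2 ->
  triple_clean_property Y1 -> Y1 a -> Y1 b -> Y1 c -> triple_clean_at Y a b c.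
Proof.
move=> [_ [_ [_ [_ [f1 _]]]]] T1 a1 b1 c1.
have [F [fF [Fa [Fb [Fc hF]]]]] := T1 a b c a1 b1 c1.
by exists F; split=> //; apply: full_in_trans f1 fF.
Qed.

Section Mixed.
Variables (Y Y1 Y2 : vset R n) (a b c : V).
Hypotheses (D : decomposition Y Y1 Y2) (a1 : Y1 a) (b1 : Y1 b) (c2 : Y2 c).

Let disj v : ~ (Y1 v /\ Y2 v). Proof. by case: D => _ []. Qed.
Let f1 : full_in Y Y1. Proof. by case: D => _ [_ [_ [_ []]]]. Qed.
Let f2 : full_in Y Y2. Proof. by case: D => _ [_ [_ [_ []]]]. Qed.

Local Notation U := (<[a]> + <[b]>)%VS.
Local Notation W := <[c]>%VS.
Let F : vset R n := fun v => Y v /\ (v \in U \/ v \in W).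

Let Y1_of_U v : Y v -> v \in U -> Y1 v.
Proof. by move=> Yv /span2E; apply: full_in_span2 f1 a1 b1 Yv. Qed.

Let Y2_of_W v : Y v -> v \in W -> Y2 v.
Proof.
by rewrite -[W]addvv => Yv /span2E; apply: full_in_span2 f2 c2 c2 Yv.
Qed.

Let capUW : (U :&: W = 0)%VS.
Proof.
apply: capv_line_eq0; apply/negP => /(Y1_of_U (f2.1 c c2)) c1.
exact: disj (conj c1 c2).
Qed.

Let full_in_F : full_in Y F.
Proof.
split=> [v [] //|x y [Yx Fx] [Yy Fy] v].
split=> [[[Yv _] xyv] //|[Yv xyv]]; split=> //; split=> //.
have cross x' y' : x' \in U -> y' \in W -> Y x' -> Y y' -> span2 x' y' v ->
    v \in U \/ v \in W.
  move=> Ux' Wy' Yx' Yy'.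
  move=> /(decomposition_span2 D (Y1_of_U Yx' Ux') (Y2_of_W Yy' Wy') Yv).
  by case=> /vlineP[k ->]; [left|right]; rewrite memvZ.
case: Fx Fy => [Ux|Wx] [Uy|Wy].
- by left; apply: span2_memv Ux Uy xyv.
- exact: cross Ux Wy Yx Yy xyv.
- exact: cross Uy Wx Yy Yx (span2_sym xyv).
- by right; apply: span2_memv Wx Wy xyv.
Qed.

Let hereditarily_clean_F :
  triple_clean_property Y1 -> triple_clean_property Y2 -> hereditarily_clean F.
Proof.
move=> T1 T2 S SF; apply: (clean_split (Q := fun v => v \in U) capUW).
- by [].
- by move=> x /SF [_ [|]].
- have [G1 [fG1 [G1a [G1b [_ hG1]]]]] := T1 a b b a1 b1 b1.
  apply: hG1 => x [/SF [Yx _] Ux].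
  by apply: (full_in_span2 fG1 G1a G1b (Y1_of_U Yx Ux)); apply/span2E.
- have [G2 [fG2 [G2c [_ [_ hG2]]]]] := T2 c c c c2 c2 c2.
  apply: hG2 => x [/SF [Yx [//|Wx]] _].
  by apply: (full_in_span2 fG2 G2c G2c (Y2_of_W Yx Wx)); rewrite span2E addvv.
Qed.

Lemma triple_clean_at_mixed :
  triple_clean_property Y1 -> triple_clean_property Y2 ->
  triple_clean_at Y a b c.
Proof.
move=> T1 T2; exists F; split; first exact: full_in_F.
split; first by split; [apply: f1.1|left; apply: subvP (addvSl _ _) _ (memv_line _)].
split; first by split; [apply: f1.1|left; apply: subvP (addvSr _ _) _ (memv_line _)].
split; first by split; [apply: f2.1|right; apply: memv_line].
exact: hereditarily_clean_F.
Qed.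

End Mixed.
End Decomposition.

Theorem lemma5p2 (R : realType) (n : nat) (Y Y1 Y2 : vset R n) :
  decomposition Y Y1 Y2 ->
  triple_clean_property Y1 -> triple_clean_property Y2 ->
  triple_clean_property Y.
Proof.
move=> D T1 T2 a b c Ya Yb Yc.
wlog a1 : Y1 Y2 D T1 T2 / Y1 a.
  move=> wlog_a1; case: (D) => cover _; case/cover: Ya => [a1|a2].
    exact: (wlog_a1 Y1 Y2).
  exact: (wlog_a1 Y2 Y1 (decomposition_sym D)).
have [cover _] := D.
case/cover: Yb => [b1|b2]; case/cover: Yc => [c1|c2].
- exact: triple_clean_at_part D T1 a1 b1 c1.
- exact: triple_clean_at_mixed D a1 b1 c2 T1 T2.
- apply: triple_clean_at_rot; exact: triple_clean_at_mixed D c1 a1 b2 T1 T2.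
- do 2 apply: triple_clean_at_rot.
  exact: triple_clean_at_mixed (decomposition_sym D) b2 c2 a1 T2 T1.
Qed.
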